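(* Let $\lambda\in\mathbf{C}$ with $\lambda\neq1$ and let $r\in\mathbf{Z}_{+}$. For every $n\in\mathbf{Z}_{+}$ (nonnegative integers), \[ H_{n}(x\vert\lambda)=\frac{1}{(1-\lambda)^{r}}\sum_{k=0}^{n}\binom{n}{k}\Bigl(\sum_{j=0}^{r}\binom{r}{j}(-\lambda)^{r-j}H_{n-k}(j\vert\lambda)\Bigr)H_{k}^{(r)}(x\vert\lambda). \]
   Context: For $\lambda\in\mathbf{C}$, $\lambda\neq1$, the Frobenius–Euler polynomials are defined by $\frac{1-\lambda}{e^{t}-\lambda}e^{xt}=\sum_{n=0}^{\infty}H_{n}(x\vert\lambda)\frac{t^{n}}{n!}$, and for $r\in\mathbf{Z}_{+}$ the Frobenius–Euler polynomials of order $r$ are defined by $\left(\frac{1-\lambda}{e^{t}-\lambda}\right)^{r}e^{xt}=\sum_{n=0}^{\infty}H_{n}^{(r)}(x\vert\lambda)\frac{t^{n}}{n!}$. $H_{n-k}(j\vert\lambda)$ is $H_{n-k}(x\vert\lambda)$ evaluated at $x=j$. *)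

From HB Require Import structures.
From mathcomp Require Import all_boot all_order all_algebra.
From mathcomp Require Export complex.
From mathcomp Require Export reals.
Set Implicit Arguments. Unset Strict Implicit. Unset Printing Implicit Defensive.
Import Order.TTheory GRing.Theory Num.Theory.
Local Open Scope ring_scope.

(* Formal power series in t over a field F, given by their coefficient
   sequences (coefficient of t^n). *)
Section FPS.
Variable F : fieldType.
Definition fps := nat -> F.

Definition fps_one : fps := fun n => if n == 0%N then 1 else 0.

Definition fps_mul (a b : fps) : fps :=
  fun n => \sum_(i < n.+1) a i * b (n - i)%N.

Definition fps_pow (a : fps) (r : nat) : fps := iter r (fps_mul a) fps_one.

(* multiplicative inverse (meaningful when a 0 != 0):
   b 0 = a0^-1,  b (n+1) = - a0^-1 * sum_{i=0}^{n} a (i+1) * b (n-i) *)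
Fixpoint fps_inv_list (a : fps) (n : nat) : seq F :=
  match n with
  | 0%N => [:: (a 0%N)^-1]
  | m.+1 => let s := fps_inv_list a m in
            rcons s (- (a 0%N)^-1 *
                     \sum_(i < m.+1) a i.+1 * nth 0 s (m - i)%N)
  end.
Definition fps_inv (a : fps) : fps := fun n => nth 0 (fps_inv_list a n) n.

Definition fps_exp (c : F) : fps := fun n => c ^+ n / (n`!)%:R.

(* (1 - lam) / (e^t - lam) *)
Definition FE_base (lam : F) : fps :=
  fun n => (1 - lam) *
    fps_inv (fun m => (m`!)%:R^-1 - (if m == 0%N then lam else 0)) n.

(* Frobenius-Euler polynomials H_n(x|lam):
   (1-lam)/(e^t-lam) e^{xt} = sum_n H_n(x|lam) t^n/n! *)
Definition FrobEuler (lam x : F) (n : nat) : F :=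
  (n`!)%:R * fps_mul (FE_base lam) (fps_exp x) n.

(* Frobenius-Euler polynomials of order r, H_n^{(r)}(x|lam):
   ((1-lam)/(e^t-lam))^r e^{xt} = sum_n H_n^{(r)}(x|lam) t^n/n! *)
Definition FrobEulerOrd (lam : F) (r : nat) (x : F) (n : nat) : F :=
  (n`!)%:R * fps_mul (fps_pow (FE_base lam) r) (fps_exp x) n.
End FPS.

(* Truncate every power series at degree n and work with polynomials modulo
   t^(n+1).  There the generating function B := (1 - lam)/(e^t - lam)
   satisfies B (e^t - lam) = 1 - lam, and by the binomial theorem
   (e^t - lam)^r = sum_j C(r,j) (-lam)^(r-j) e^(jt).  Hence
   (1 - lam)^r B e^(xt) = (B^r e^(xt)) (B (e^t - lam)^r)
                        = (B^r e^(xt)) (sum_j C(r,j) (-lam)^(r-j) B e^(jt)),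
   and comparing the coefficients of t^n / n! gives the identity. *)
From HB Require Import structures.
From mathcomp Require Import all_boot all_order all_algebra.
From mathcomp Require Import complex reals ring.
Import Order.TTheory GRing.Theory Num.Theory.
Local Open Scope ring_scope.
Set Implicit Arguments. Unset Strict Implicit.

Section Truncation.
Variable F : fieldType.
Implicit Types (p q : {poly F}) (f g : fps F) (N : nat).

Definition eq_upto N p q := forall m, (m <= N)%N -> p`_m = q`_m.

Definition represents N f p := forall m, (m <= N)%N -> f m = p`_m.

Lemma eq_upto_sym N p q : eq_upto N p q -> eq_upto N q p.
Proof. by move=> h m hm; rewrite h. Qed.

Lemma eq_upto_trans N p q s : eq_upto N p q -> eq_upto N q s -> eq_upto N p s.
Proof. by move=> h1 h2 m hm; rewrite h1 ?h2. Qed.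

Lemma eq_uptoM N p p' q q' :
  eq_upto N p p' -> eq_upto N q q' -> eq_upto N (p * q) (p' * q').
Proof.
move=> hp hq m hm; rewrite !coefM; apply: eq_bigr => -[i /= lt_im] _.
rewrite hp ?hq ?(leq_trans (leq_subr i m) hm) //.
by rewrite ltnS in lt_im; apply: leq_trans hm.
Qed.

Lemma eq_uptoMl N p q q' : eq_upto N q q' -> eq_upto N (p * q) (p * q').
Proof. exact: eq_uptoM. Qed.

Lemma eq_uptoZ N c p q : eq_upto N p q -> eq_upto N (c *: p) (c *: q).
Proof. by move=> h m hm; rewrite !coefZ h. Qed.

Lemma eq_uptoX N p q k : eq_upto N p q -> eq_upto N (p ^+ k) (q ^+ k).
Proof.
by move=> h; elim: k => [|k IH] //; rewrite !exprS; apply: eq_uptoM.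
Qed.

Lemma eq_upto_sum N k (P Q : 'I_k -> {poly F}) :
  (forall i, eq_upto N (P i) (Q i)) ->
  eq_upto N (\sum_(i < k) P i) (\sum_(i < k) Q i).
Proof. by move=> h m hm; rewrite !coef_sum; apply: eq_bigr => i _; apply: h. Qed.

Lemma represents_poly N f : represents N f (\poly_(i < N.+1) f i).
Proof. by move=> m hm; rewrite coef_poly ltnS hm. Qed.

Lemma represents_eq_upto N f p q :
  represents N f p -> represents N f q -> eq_upto N p q.
Proof. by move=> hp hq m hm; rewrite -hp ?hq. Qed.

Lemma represents_mul N f g p q :
  represents N f p -> represents N g q -> represents N (fps_mul f g) (p * q).
Proof.
move=> hp hq m hm; rewrite coefM; apply: eq_bigr => -[i /= lt_im] _.
rewrite hp ?hq ?(leq_trans (leq_subr i m) hm) //.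
by rewrite ltnS in lt_im; apply: leq_trans hm.
Qed.

Lemma represents_pow N f p r :
  represents N f p -> represents N (fps_pow f r) (p ^+ r).
Proof.
move=> hp; elim: r => [|r IH]; first by move=> [|m] _; rewrite coef1.
by rewrite exprS /fps_pow iterS; apply: represents_mul.
Qed.

Section Inverse.
Variable a : fps F.
Hypothesis a0_neq0 : a 0%N != 0.

Lemma size_fps_inv_list m : size (fps_inv_list a m) = m.+1.
Proof. by elim: m => [|m IH] //=; rewrite size_rcons IH. Qed.

Lemma nth_fps_inv_list m k :
  (k <= m)%N -> nth 0 (fps_inv_list a m) k = fps_inv a k.
Proof.
elim: m => [|m IH]; first by rewrite leqn0 => /eqP ->.
rewrite leq_eqVlt => /predU1P[-> //|lt_km].
by rewrite /= nth_rcons size_fps_inv_list lt_km IH.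
Qed.

Lemma fps_invS m : fps_inv a m.+1 =
  - (a 0%N)^-1 * \sum_(i < m.+1) a i.+1 * fps_inv a (m - i)%N.
Proof.
rewrite {1}/fps_inv /= nth_rcons size_fps_inv_list ltnn eqxx.
by congr (_ * _); apply: eq_bigr => i _; rewrite nth_fps_inv_list ?leq_subr.
Qed.

Lemma fps_mulV m : fps_mul a (fps_inv a) m = fps_one F m.
Proof.
rewrite /fps_mul /fps_one; case: m => [|m].
  by rewrite big_ord1 /fps_inv /= mulfV.
rewrite big_ord_recl /= subn0 fps_invS.
under eq_bigr => i _ do rewrite /bump /= add1n subSS.
by rewrite mulrA mulrN mulfV // mulN1r addNr.
Qed.

End Inverse.
End Truncation.
Arguments represents_poly {F} N f.

Section Exponential.
Variable F : numFieldType.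

Lemma natr_fact_neq0 m : (m`!)%:R != 0 :> F.
Proof. by rewrite pnatr_eq0 -lt0n fact_gt0. Qed.

Definition exp_poly (N : nat) (c : F) : {poly F} := \poly_(i < N.+1) fps_exp c i.

Lemma exp_polyD N b c :
  eq_upto N (exp_poly N b * exp_poly N c) (exp_poly N (b + c)).
Proof.
move=> m hm; rewrite coefM coef_poly ltnS hm /fps_exp addrC exprDn mulr_suml.
apply: eq_bigr => -[i /= lt_im] _.
have le_im : (i <= m)%N by rewrite -ltnS.
rewrite !coef_poly ltnS (leq_trans le_im hm) ltnS (leq_trans (leq_subr i m) hm).
rewrite /fps_exp -mulr_natr -(bin_fact le_im) !natrM.
have bin_neq0 : ('C(m, i))%:R != 0 :> F by rewrite pnatr_eq0 -lt0n bin_gt0.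
by field; rewrite !natr_fact_neq0 bin_neq0.
Qed.

Lemma exp_polyMn N j : eq_upto N (exp_poly N 1 ^+ j) (exp_poly N j%:R).
Proof.
elim: j => [|j IH] m hm.
  rewrite expr0 coef1 coef_poly ltnS hm /fps_exp.
  by case: m {hm} => [|m]; rewrite ?expr0 ?divr1 // expr0n mul0r.
rewrite exprSr -addn1 natrD.
by apply: eq_upto_trans (eq_uptoM IH (fun _ _ => erefl)) (exp_polyD _ _) _ _.
Qed.

End Exponential.

Section FrobeniusEuler.
Variables (F : numFieldType) (lam : F) (r n : nat).

Let B : {poly F} := \poly_(i < n.+1) FE_base lam i.
Let E : F -> {poly F} := exp_poly n.
(* The generating function of the inner sums over j. *)
Let Q : {poly F} :=
  \sum_(j < r.+1) (('C(r, j))%:R * (- lam) ^+ (r - j)) *: E j%:R.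

Lemma FrobEuler_coef m c :
  (m <= n)%N -> FrobEuler lam c m = (m`!)%:R * (B * E c)`_m.
Proof.
by move=> hm; rewrite /FrobEuler (represents_mul (represents_poly n _)
  (represents_poly n _) hm).
Qed.

Lemma FrobEulerOrd_coef m c :
  (m <= n)%N -> FrobEulerOrd lam r c m = (m`!)%:R * (B ^+ r * E c)`_m.
Proof.
by move=> hm; rewrite /FrobEulerOrd (represents_mul
  (represents_pow r (represents_poly n _)) (represents_poly n _) hm).
Qed.

Lemma FE_base_denominator :
  lam != 1 -> eq_upto n (B * (E 1 - lam%:P)) (1 - lam)%:P.
Proof.
move=> lam_neq1.
pose den : fps F := fun m => (m`!)%:R^-1 - (if m == 0%N then lam else 0).
have den0_neq0 : den 0%N != 0 by rewrite /den /= invr1 subr_eq0 eq_sym.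
have rep_den : represents n den (E 1 - lam%:P).
  move=> m hm; rewrite coefB coefC coef_poly ltnS hm /fps_exp expr1n mul1r.
  by rewrite /den; case: (m == 0%N).
rewrite mulrC; apply: represents_eq_upto
  (represents_mul rep_den (represents_poly n _)) _ => m _.
have -> : fps_mul den (FE_base lam) m = (1 - lam) * fps_mul den (fps_inv den) m.
  by rewrite /fps_mul mulr_sumr; apply: eq_bigr => i _; rewrite mulrCA.
by rewrite fps_mulV // coefC /fps_one; case: (m == 0%N); rewrite ?mulr1 ?mulr0.
Qed.

Lemma inner_sum_poly : eq_upto n Q ((E 1 - lam%:P) ^+ r).
Proof.
rewrite addrC exprDn; apply: eq_upto_sum => j.
rewrite -polyCN -rmorphXn mul_polyC -scaler_nat scalerA mulrC.
exact/eq_uptoZ/eq_upto_sym/exp_polyMn.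
Qed.

Lemma inner_sum_coef m : (m <= n)%N ->
  \sum_(j < r.+1) ('C(r, j))%:R * (- lam) ^+ (r - j) * FrobEuler lam j%:R m =
  (m`!)%:R * (B * Q)`_m.
Proof.
move=> hm; rewrite mulr_sumr coef_sum mulr_sumr; apply: eq_bigr => j _.
by rewrite FrobEuler_coef // -scalerAr coefZ mulrCA.
Qed.

Lemma convolution_coef (x : F) :
  \sum_(k < n.+1) ('C(n, k))%:R *
    (\sum_(j < r.+1) ('C(r, j))%:R * (- lam) ^+ (r - j) *
       FrobEuler lam j%:R (n - k)) * FrobEulerOrd lam r x k =
  (n`!)%:R * (B ^+ r * E x * (B * Q))`_n.
Proof.
rewrite coefM mulr_sumr; apply: eq_bigr => -[k /= lt_kn] _.
have le_kn : (k <= n)%N by rewrite -ltnS.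
rewrite inner_sum_coef ?leq_subr // FrobEulerOrd_coef // -(bin_fact le_kn).
by rewrite !natrM; ring.
Qed.

Lemma product_upto (x : F) : lam != 1 ->
  eq_upto n (B ^+ r * E x * (B * Q)) ((1 - lam) ^+ r *: (B * E x)).
Proof.
move=> lam_neq1.
apply: eq_upto_trans (eq_uptoMl _ (eq_uptoMl _ inner_sum_poly)) _.
have -> : B ^+ r * E x * (B * (E 1 - lam%:P) ^+ r) =
          B * E x * (B * (E 1 - lam%:P)) ^+ r by rewrite exprMn; ring.
apply: eq_upto_trans (eq_uptoMl _ (eq_uptoX r (FE_base_denominator lam_neq1))) _.
by move=> m _; rewrite -rmorphXn mulrC mul_polyC.
Qed.

End FrobeniusEuler.

Theorem theorem6 (R : realType) (lam : R[i]) (hlam : lam != 1) (r n : nat)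
    (x : R[i]) :
  FrobEuler lam x n =
  ((1 - lam) ^+ r)^-1 *
    \sum_(k < n.+1) ('C(n, k))%:R *
      (\sum_(j < r.+1) ('C(r, j))%:R * (- lam) ^+ (r - j) *
          FrobEuler lam (j%:R) (n - k)) *
      FrobEulerOrd lam r x k.
Proof.
have lam_pow_neq0 : (1 - lam) ^+ r != 0 by rewrite expf_neq0 // subr_eq0 eq_sym.
rewrite convolution_coef (product_upto r x hlam (leqnn n)) coefZ.
by rewrite (@FrobEuler_coef _ lam n n x) // mulrCA mulKf.
Qed.
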